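(* Let $n\ge2$ and $U=\exp\!\big(i\frac{\pi}{3\sqrt3}\sum_{j=1}^n j\,(X_j+Y_j+Z_j)\big)$. Then the map $a\mapsto UaU^\dagger$ restricts to a Lie algebra isomorphism from $\mathfrak a_{10}(n)$ onto $\mathfrak a_7(n)$.
   Context: Pauli matrices $I,X,Y,Z$; $A_j$ is $A$ acting on qubit $j$ (identity elsewhere); $A_jB_{j+1}$ denotes the length-$n$ Pauli string with $A$ at position $j$, $B$ at $j+1$, $I$ elsewhere. For a set $S$ of Pauli strings, $\mathrm{Lie}\langle S\rangle$ is the smallest real Lie subalgebra of $\mathfrak u(2^n)$ containing $\{iP:P\in S\}$. $\mathfrak a_{10}(n)=\mathrm{Lie}\langle X_jY_{j+1},Y_jZ_{j+1},Z_jX_{j+1}:1\le j\le n-1\rangle$ and $\mathfrak a_7(n)=\mathrm{Lie}\langle X_jX_{j+1},Y_jY_{j+1},Z_jZ_{j+1}:1\le j\le n-1\rangle$. *)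

From HB Require Import structures.
From mathcomp Require Import all_boot all_order all_algebra.
From mathcomp Require Import complex.
From mathcomp Require Import boolp classical_sets reals topology normedtype sequences trigo.
Set Implicit Arguments. Unset Strict Implicit. Unset Printing Implicit Defensive.
Import Order.TTheory GRing.Theory Num.Theory.
Import numFieldNormedType.Exports.
Local Open Scope ring_scope.

Section Pauli.
Variable R : realType.
Local Notation C := (R[i]).

Definition iC : C := Complex 0 1.
Definition rC (r : R) : C := Complex r 0.

Inductive pauli := pI | pX | pY | pZ.

(* entries of the single-qubit Pauli matrices, indexed by bits
   (false = |0>, true = |1>) *)
Definition pauli_entry (p : pauli) (a b : bool) : C :=
  match p, a, b with
  | pI, false, false => 1 | pI, true, true => 1
  | pX, false, true => 1 | pX, true, false => 1
  | pY, false, true => - iC | pY, true, false => iC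
  | pZ, false, false => 1 | pZ, true, true => -1
  | _, _, _ => 0
  end.

(* k-th binary digit of a basis index; qubit k+1 <-> bit k *)
Definition qbit (a k : nat) : bool := odd (a %/ 2 ^ k).

(* Pauli string s_1 (x) ... (x) s_n on n qubits as a 2^n x 2^n matrix
   (entrywise expansion of the Kronecker product); s k is the Pauli
   acting on qubit k+1 *)
Definition pstring (n : nat) (s : nat -> pauli) : 'M[C]_(2 ^ n) :=
  \matrix_(a, b) \prod_(k < n) pauli_entry (s k) (qbit a k) (qbit b k).

(* A_j B_{j+1} (qubits numbered 1..n) *)
Definition two_site (n : nat) (A B : pauli) (j : nat) : 'M[C]_(2 ^ n) :=
  pstring n (fun k => if k.+1 == j then A else if k.+1 == j.+1 then B else pI).

Definition one_site (n : nat) (A : pauli) (j : nat) : 'M[C]_(2 ^ n) :=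
  pstring n (fun k => if k.+1 == j then A else pI).

Definition adj {m} (M : 'M[C]_m) : 'M[C]_m := (map_mx (@conjc R) M)^T.

Definition comm {m} (A B : 'M[C]_m) : 'M[C]_m := A *m B - B *m A.

Definition skew_herm {m} (A : 'M[C]_m) : Prop := adj A = - A.

(* Lie<S>: smallest real Lie subalgebra of u(m) containing { i P | P in S } *)
Definition lie_gen {m} (S : 'M[C]_m -> Prop) (M : 'M[C]_m) : Prop :=
  forall L : 'M[C]_m -> Prop,
    (forall A, L A -> skew_herm A) ->
    (forall A B, L A -> L B -> L (A + B)) ->
    (forall (r : R) A, L A -> L (rC r *: A)) ->
    (forall A B, L A -> L B -> L (comm A B)) ->
    (forall P, S P -> L (iC *: P)) ->
    L M.

Definition a10 (n : nat) : 'M[C]_(2 ^ n) -> Prop :=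
  lie_gen (fun P => exists j, (1 <= j <= n - 1)%N /\
     (P = two_site n pX pY j \/ P = two_site n pY pZ j \/ P = two_site n pZ pX j)).

Definition a7 (n : nat) : 'M[C]_(2 ^ n) -> Prop :=
  lie_gen (fun P => exists j, (1 <= j <= n - 1)%N /\
     (P = two_site n pX pX j \/ P = two_site n pY pY j \/ P = two_site n pZ pZ j)).

(* matrix power and matrix exponential (entrywise limit of the partial sums
   of the exponential series, taken separately on real and imaginary parts) *)
Definition mxpow {m} (A : 'M[C]_m) (k : nat) : 'M[C]_m := iter k (mulmx A) 1%:M.

Definition exp_partial {m} (A : 'M[C]_m) (N : nat) : 'M[C]_m :=
  \sum_(k < N) (rC (k`!%:R)^-1 *: mxpow A k).

Definition mexp {m} (A : 'M[C]_m) : 'M[C]_m :=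
  \matrix_(a, b) Complex (limn (fun N => @complex.Re R (exp_partial A N a b)))
                         (limn (fun N => @complex.Im R (exp_partial A N a b))).

Definition hamH (n : nat) : 'M[C]_(2 ^ n) :=
  \sum_(1 <= j < n.+1) (j%:R *: (one_site n pX j + one_site n pY j + one_site n pZ j)).

Definition Umat (n : nat) : 'M[C]_(2 ^ n) :=
  mexp ((iC * rC (pi / (3 * Num.sqrt 3))) *: hamH n).

End Pauli.

From HB Require Import structures.
From mathcomp Require Import all_boot all_order all_algebra.
From mathcomp Require Import complex.
From mathcomp Require Import boolp classical_sets reals topology normedtype sequences trigo.
From mathcomp Require Import ring lra.
Import Order.TTheory GRing.Theory Num.Theory.
Import numFieldNormedType.Exports.
Local Open Scope ring_scope.
Set Implicit Arguments. Unset Strict Implicit. Unset Printing Implicit Defensive.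

(* Since ((X + Y + Z) / sqrt3)^2 = 1, the single-qubit operator exp (i t (X + Y + Z) / sqrt3)
   equals cos t + i sin t (X + Y + Z) / sqrt3, and these operators form a one-parameter group.
   Diagonalising the commuting terms of H with the 2^n product projectors onto the eigenvalues
   +- sqrt3 of the X_j + Y_j + Z_j shows that U is the tensor product of these rotations with
   t = j pi / 3 on qubit j.  The rotation with t = pi / 3 conjugates X -> Z -> Y -> X, so U sends
   A_j B_(j+1) to (c^j A)_j (c^(j+1) B)_(j+1) for this cycle c.  As X = c Y, Y = c Z and Z = c X,
   each generator X_j Y_(j+1), Y_j Z_(j+1), Z_j X_(j+1) of a10 goes to some P_j P_(j+1), and every
   such P in {X, Y, Z} arises: the generators of a10 are mapped onto those of a7.  Conjugation by
   a unitary is an injective automorphism of the real Lie algebra u(2^n), hence it maps the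
   generated algebras onto each other. *)

Lemma qbit0 c (b : bool) : qbit (c * 2 + b) 0 = b.
Proof. by rewrite /qbit expn0 divn1 oddD oddM andbF; case: b. Qed.

Lemma qbitS c (b : bool) k : qbit (c * 2 + b) k.+1 = qbit c k.
Proof. by rewrite /qbit expnS divnMA divnMDl //; case: b; rewrite ?addn0. Qed.

Lemma qbit_inj n a b : (a < 2 ^ n)%N -> (b < 2 ^ n)%N ->
  (forall k, (k < n)%N -> qbit a k = qbit b k) -> a = b.
Proof.
elim: n a b => [|n IH] a b; first by rewrite expn0 !ltnS !leqn0 => /eqP-> /eqP->.
move=> lt_a lt_b eq_ab.
have odd_ab : odd a = odd b by have := eq_ab 0%N erefl; rewrite /qbit expn0 !divn1.
rewrite (divn_eq a 2) (divn_eq b 2) !modn2 odd_ab; congr (_ * 2 + _)%N.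
apply: IH; rewrite ?ltn_divLR // -?expnSr // => k lt_kn.
by have := eq_ab k.+1 lt_kn; rewrite /qbit expnS !divnMA.
Qed.

Lemma sum_nat_mul2 (V : nmodType) m (G : nat -> V) :
  \sum_(0 <= c < m * 2) G c = \sum_(0 <= c < m) (G (c * 2)%N + G (c * 2).+1).
Proof.
elim: m => [|m IH]; first by rewrite !big_geq.
by rewrite mulSn add2n !big_nat_recr //= IH addrA.
Qed.

Section Tensor.
Variable R : realType.
Local Notation C := R[i].
Local Notation pe := (@pauli_entry R).

Definition qop := bool -> bool -> C.

Definition tensor n (f : nat -> qop) : 'M[C]_(2 ^ n) :=
  \matrix_(a, b) \prod_(k < n) f k (qbit a k) (qbit b k).

Definition qmul (f g : qop) : qop := fun a b => f a false * g false b + f a true * g true b.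
Definition qadj (f : qop) : qop := fun a b => conjc (f b a).
Definition qid : qop := fun a b => (a == b)%:R.

Lemma sum_prod_qbit n (F : nat -> bool -> C) :
  \sum_(c < 2 ^ n) \prod_(k < n) F k (qbit c k) = \prod_(k < n) (F k false + F k true).
Proof.
elim: n F => [|n IH] F; first by rewrite big_ord1 !big_ord0.
rewrite -(big_mkord xpredT (fun c => \prod_(k < n.+1) F k (qbit c k))) expnSr sum_nat_mul2.
rewrite big_ord_recl -(IH (fun k => F k.+1)) big_mkord big_distrr /=.
apply: eq_bigr => c _; rewrite !big_ord_recl mulrDl.
have [q0 q1] := (qbit0 c false, qbit0 c true); rewrite addn0 in q0; rewrite addn1 in q1.
rewrite q0 q1; congr (_ * _ + _ * _); apply: eq_bigr => k _.
  by have := qbitS c false k; rewrite addn0 => ->.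
by have := qbitS c true k; rewrite addn1 => ->.
Qed.

Lemma tensor_ext n (f g : nat -> qop) :
  (forall k a b, (k < n)%N -> f k a b = g k a b) -> tensor n f = tensor n g.
Proof. by move=> fg; apply/matrixP => a b; rewrite !mxE; apply: eq_bigr => k _; apply: fg. Qed.

Lemma mulmx_tensor n (f g : nat -> qop) :
  tensor n f *m tensor n g = tensor n (fun k => qmul (f k) (g k)).
Proof.
apply/matrixP => a b; rewrite !mxE.
under eq_bigr do rewrite !mxE -big_split.
exact: (sum_prod_qbit n (fun k c => f k (qbit a k) c * g k c (qbit b k))).
Qed.

Lemma adj_tensor n (f : nat -> qop) : adj (tensor n f) = tensor n (fun k => qadj (f k)).
Proof. by apply/matrixP => a b; rewrite !mxE rmorph_prod. Qed.

Lemma tensorZ n (w : nat -> C) (f : nat -> qop) :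
  tensor n (fun k a b => w k * f k a b) = (\prod_(k < n) w k) *: tensor n f.
Proof. by apply/matrixP => a b; rewrite !mxE big_split. Qed.

Lemma tensor_expand n (c : nat -> bool -> C) (P : nat -> bool -> qop) :
  tensor n (fun k a b => c k false * P k false a b + c k true * P k true a b) =
  \sum_(s < 2 ^ n) (\prod_(k < n) c k (qbit s k)) *: tensor n (fun k => P k (qbit s k)).
Proof.
apply/matrixP => a b; rewrite summxE mxE.
rewrite -(sum_prod_qbit n (fun k x => c k x * P k x (qbit a k) (qbit b k))).
by apply: eq_bigr => s _; rewrite !mxE -big_split.
Qed.

Lemma tensor_qid n : tensor n (fun _ => qid) = 1%:M.
Proof.
apply/matrixP => a b; rewrite !mxE; case: (eqVneq a b) => [->|neq_ab].
  by rewrite big1 // => k _; rewrite /qid eqxx.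
have [k neq_k] : exists k : 'I_n, qbit a k != qbit b k.
  apply/existsP; apply: contra_neqT neq_ab => /existsPn eq_ab.
  apply/val_inj/(qbit_inj (ltn_ord a) (ltn_ord b)) => k lt_kn.
  by apply/eqP; have := eq_ab (Ordinal lt_kn); rewrite negbK.
by rewrite (bigD1 k) //= /qid (negPf neq_k) mul0r.
Qed.

Lemma tensorD_at n k0 (f h1 h2 : nat -> qop) : (k0 < n)%N ->
  tensor n (fun k => if k == k0 then h1 k else f k) +
  tensor n (fun k => if k == k0 then h2 k else f k) =
  tensor n (fun k => if k == k0 then (fun a b => h1 k a b + h2 k a b) else f k).
Proof.
move=> lt_k0n; apply/matrixP => a b; rewrite !mxE.
set j := Ordinal lt_k0n.
rewrite [X in X + _](bigD1 j) // [X in _ + X](bigD1 j) // [RHS](bigD1 j) //= eqxx mulrDl.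
by congr (_ * _ + _ * _); apply: eq_bigr => k /negPf; rewrite -val_eqE /= => ->.
Qed.

Lemma qmulA (f g h : qop) : qmul (qmul f g) h = qmul f (qmul g h).
Proof. by apply/funext => a; apply/funext => b; rewrite /qmul; ring. Qed.

Lemma qadj_mul (f g : qop) : qadj (qmul f g) = qmul (qadj g) (qadj f).
Proof.
apply/funext => a; apply/funext => b.
by rewrite /qadj /qmul rmorphD !rmorphM [_ * conjc (g _ _)]mulrC [X in _ + X]mulrC.
Qed.

Lemma qmul_pI (h : qop) : qmul (pe pI) h = h.
Proof.
apply/funext => a; apply/funext => b.
by case: a; rewrite /qmul /= ?mul1r ?mul0r ?addr0 ?add0r.
Qed.

Definition qconj (u h : qop) : qop := qmul (qmul u h) (qadj u).

Lemma qconj_mul (u v h : qop) : qconj (qmul u v) h = qconj u (qconj v h).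
Proof. by rewrite /qconj qadj_mul !qmulA. Qed.

End Tensor.

Arguments qid {R}.

Section LieClosure.
Variable R : realType.
Local Notation C := R[i].
Variable m : nat.
Implicit Types (A B P U : 'M[C]_m) (S T : 'M[C]_m -> Prop).

Lemma adjD A B : adj (A + B) = adj A + adj B.
Proof. by apply/matrixP => a b; rewrite !mxE rmorphD. Qed.

Lemma adjB A B : adj (A - B) = adj A - adj B.
Proof. by apply/matrixP => a b; rewrite !mxE rmorphB. Qed.

Lemma adjZ c A : adj (c *: A) = conjc c *: adj A.
Proof. by apply/matrixP => a b; rewrite !mxE rmorphM. Qed.

Lemma adjM A B : adj (A *m B) = adj B *m adj A.
Proof. by rewrite /adj map_mxM trmx_mul. Qed.

Lemma adjK A : adj (adj A) = A.
Proof. by apply/matrixP => a b; rewrite !mxE conjcK. Qed.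

Lemma skew_hermD A B : skew_herm A -> skew_herm B -> skew_herm (A + B).
Proof. by rewrite /skew_herm adjD => -> ->; rewrite opprD. Qed.

Lemma skew_hermZ (r : R) A : skew_herm A -> skew_herm (rC r *: A).
Proof.
have conj_rC : conjc (rC r) = rC r by rewrite /rC /= oppr0.
by rewrite /skew_herm adjZ conj_rC => ->; rewrite scalerN.
Qed.

Lemma skew_herm_comm A B : skew_herm A -> skew_herm B -> skew_herm (comm A B).
Proof. by rewrite /skew_herm /comm adjB !adjM => -> ->; rewrite !mulNmx !mulmxN !opprK opprB. Qed.

Lemma skew_herm_iC P : adj P = P -> skew_herm (iC R *: P).
Proof.
rewrite /skew_herm adjZ => ->; rewrite -scaleNr; congr (_ *: _).
by apply/eqP; rewrite eq_complex /= oppr0 !eqxx.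
Qed.

Lemma lie_genD S A B : lie_gen S A -> lie_gen S B -> lie_gen S (A + B).
Proof.
rewrite /lie_gen => gA gB L skL DL ZL CL SL.
by apply: (DL); [apply: gA | apply: gB].
Qed.

Lemma lie_genZ S (r : R) A : lie_gen S A -> lie_gen S (rC r *: A).
Proof. by rewrite /lie_gen => gA L skL DL ZL CL SL; apply: (ZL); apply: gA. Qed.

Lemma lie_gen_comm S A B : lie_gen S A -> lie_gen S B -> lie_gen S (comm A B).
Proof.
rewrite /lie_gen => gA gB L skL DL ZL CL SL.
by apply: (CL); [apply: gA | apply: gB].
Qed.

Lemma lie_gen_base S P : S P -> lie_gen S (iC R *: P).
Proof. by move=> SP L skL DL ZL CL SL; apply: SL. Qed.

Definition uconj U A := U *m A *m adj U.

Lemma uconjD U A B : uconj U (A + B) = uconj U A + uconj U B.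
Proof. by rewrite /uconj mulmxDr mulmxDl. Qed.

Lemma uconjZ U c A : uconj U (c *: A) = c *: uconj U A.
Proof. by rewrite /uconj -scalemxAr -scalemxAl. Qed.

Lemma uconjK U : adj U *m U = 1%:M -> cancel (uconj U) (uconj (adj U)).
Proof.
by move=> UU A; rewrite /uconj adjK !mulmxA UU mul1mx -mulmxA UU mulmx1.
Qed.

Lemma uconj_comm U A B : adj U *m U = 1%:M ->
  uconj U (comm A B) = comm (uconj U A) (uconj U B).
Proof.
move=> UU; rewrite /comm /uconj mulmxBr mulmxBl !mulmxA.
by rewrite -!(mulmxA _ (adj U) U) UU !mulmx1.
Qed.

Lemma lie_gen_conj U S T A : adj U *m U = 1%:M ->
  (forall P, S P -> adj P = P) -> (forall P, S P -> T (uconj U P)) ->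
  lie_gen S A -> lie_gen T (uconj U A).
Proof.
move=> UU hermS ST genA.
(* lie_gen only ranges over families of skew-Hermitian matrices, so carry skew_herm along. *)
suff [] : skew_herm A /\ lie_gen T (uconj U A) by [].
apply: (genA (fun X => skew_herm X /\ lie_gen T (uconj U X))).
- by move=> X [].
- move=> X Y [skX gX] [skY gY]; split; first exact: skew_hermD.
  by rewrite uconjD; apply: lie_genD.
- move=> r X [skX gX]; split; first exact: skew_hermZ.
  by rewrite uconjZ; apply: lie_genZ.
- move=> X Y [skX gX] [skY gY]; split; first exact: skew_herm_comm.
  by rewrite uconj_comm //; apply: lie_gen_comm.
- move=> P SP; split; first by apply: skew_herm_iC; apply: hermS.
  by rewrite uconjZ; apply: lie_gen_base; apply: ST.
Qed.

End LieClosure.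

Definition pauli_cycle (p : pauli) : pauli :=
  match p with pI => pI | pX => pZ | pY => pX | pZ => pY end.

Lemma iter_cycle_pI k : iter k pauli_cycle pI = pI.
Proof. exact: iter_fix. Qed.

Lemma iter_cycle_onto k q : exists p, iter k pauli_cycle p = q.
Proof.
elim: k q => [|k IH] q; first by exists q.
have [p' <-] := IH q.
by exists (match p' with pI => pI | pX => pY | pY => pZ | pZ => pX end); rewrite iterSr; case: p'.
Qed.

Lemma iter_cycle_eq_pI k p : iter k pauli_cycle p = pI -> p = pI.
Proof. by elim: k p => [|k IH] p //; rewrite iterSr => /IH; case: p. Qed.

Section Qubit.
Variable R : realType.
Local Notation C := R[i].
Local Notation qop := (qop R).
Local Notation pe := (@pauli_entry R).

Definition sqrt3 : R := Num.sqrt 3.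

Lemma sqrt3_sq : sqrt3 * sqrt3 = 3.
Proof. by rewrite -expr2 sqr_sqrtr. Qed.

Lemma sqrt3_gt0 : 0 < sqrt3.
Proof. by rewrite sqrtr_gt0. Qed.

Lemma cos_pi3 : cos (pi / 3) = 1 / 2 :> R.
Proof.
have pi_gt0 : (0 : R) < pi := pi_gt0 R.
have cos_gt0 : 0 < cos (pi / 3 : R) by apply: cos_gt0_pihalf; apply/andP; split; lra.
have two_x : pi - pi / 3 = (pi / 3) *+ 2 :> R by rewrite mulr2n; lra.
have := cosB (pi : R) (pi / 3); rewrite two_x cos_mulr2n cospi sinpi mul0r addr0.
nra.
Qed.

Lemma sin_pi3 : sin (pi / 3) = sqrt3 / 2 :> R.
Proof.
have pi_gt0 : (0 : R) < pi := pi_gt0 R.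
have sin_gt0 : 0 < sin (pi / 3 : R) by apply: sin_gt0_pi; apply/andP; split; lra.
have := cos2Dsin2 (pi / 3 : R); rewrite cos_pi3 => sin2.
have := sqrt3_sq; have := sqrt3_gt0; nra.
Qed.

Ltac complex_eq := apply/eqP; rewrite eq_complex /=; apply/andP; split; apply/eqP.

Definition cis (t : R) : C := Complex (cos t) (sin t).

Lemma cisD s t : cis (s + t) = cis s * cis t.
Proof. by rewrite /cis cosD sinD; complex_eq; ring. Qed.

Lemma cis0 : cis 0 = 1.
Proof. by rewrite /cis cos0 sin0. Qed.

Definition gsum : qop := fun a b => pe pX a b + pe pY a b + pe pZ a b.

Definition sgn (b : bool) : R := if b then 1 else -1.

(* (1 +- (X + Y + Z) / sqrt3) / 2 projects onto the eigenvalue +- sqrt3 of X + Y + Z. *)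
Definition gproj (b : bool) : qop :=
  fun a c => rC (1 / 2) * (qid a c + rC (sgn b * sqrt3 / 3) * gsum a c).

(* exp (i t (X + Y + Z) / sqrt3), in closed form because ((X + Y + Z) / sqrt3)^2 = 1. *)
Definition qrot (t : R) : qop :=
  fun a b => rC (cos t) * qid a b + iC R * rC (sin t * sqrt3 / 3) * gsum a b.

Lemma qrotD s t : qmul (qrot s) (qrot t) = qrot (s + t).
Proof.
apply/funext => a; apply/funext => b; rewrite /qmul /qrot cosD sinD.
have sq : sin s * sin t * (sqrt3 * sqrt3) = sin s * sin t * 3 by rewrite sqrt3_sq.
case: a; case: b; rewrite /gsum /qid /=; complex_eq; lra.
Qed.

Lemma gproj_sum : (fun a c => gproj false a c + gproj true a c) = qid.
Proof.
apply/funext => a; apply/funext => c.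
by case: a; case: c; rewrite /gproj /gsum /qid /sgn /=; complex_eq; lra.
Qed.

Lemma gsum_gproj b a c :
  qmul (pe pX) (gproj b) a c + qmul (pe pY) (gproj b) a c + qmul (pe pZ) (gproj b) a c =
  rC (sgn b * sqrt3) * gproj b a c.
Proof.
by case: a; case: c; case: b; rewrite /qmul /gproj /gsum /qid /sgn /=; complex_eq;
  have := sqrt3_sq; nra.
Qed.

Lemma qrot_spectral t :
  (fun a c => cis (- t) * gproj false a c + cis t * gproj true a c) = qrot t.
Proof.
apply/funext => a; apply/funext => c; rewrite /cis cosN sinN.
by case: a; case: c; rewrite /qrot /gproj /gsum /qid /sgn /=; complex_eq; lra.
Qed.

Lemma qconj_qrot_pi3 p : qconj (qrot (pi / 3)) (pe p) = pe (pauli_cycle p).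
Proof.
have half : sin (pi / 3) * sqrt3 / 3 = 1 / 2 :> R.
  by rewrite sin_pi3; have := sqrt3_sq; lra.
apply/funext => a; apply/funext => b; rewrite /qconj /qmul /qadj /qrot cos_pi3 half.
by case: p; case: a; case: b; rewrite /gsum /qid /=; complex_eq; lra.
Qed.

Lemma qconj_qrot k p : qconj (qrot (k.+1%:R * (pi / 3))) (pe p) = pe (iter k.+1 pauli_cycle p).
Proof.
elim: k p => [|k IH] p; first by rewrite mul1r qconj_qrot_pi3.
by rewrite mulrSr mulrDl mul1r addrC -qrotD qconj_mul IH qconj_qrot_pi3 iterS.
Qed.

End Qubit.

Arguments sqrt3 {R}.
Arguments sgn {R}.
Arguments gproj {R}.
Arguments qrot {R}.
Arguments cis {R}.

Section Exponential.
Local Open Scope classical_set_scope.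
Variable R : realType.
Local Notation C := R[i].

Definition exp_psum N (z : C) : C := \sum_(k < N) rC (k`!%:R^-1) * z ^+ k.

Lemma expr_iC_rC (t : R) k : (iC R * rC t) ^+ k =
  Complex ((~~ odd k)%:R * (-1) ^+ k./2 * t ^+ k) ((odd k)%:R * (-1) ^+ k.-1./2 * t ^+ k).
Proof.
elim: k => [|k IH].
  by rewrite expr0; apply/eqP; rewrite eq_complex /= !expr0 ?mulr1 ?mul0r ?eqxx.
rewrite exprS IH; apply/eqP; rewrite eq_complex /= uphalf_half.
have half_pred : odd k -> k.-1./2 = k./2.
  by move=> odd_k; rewrite -{1}(odd_double_half k) odd_k add1n /= doubleK.
case odd_k: (odd k) => /=; rewrite ?(half_pred odd_k) ?add1n ?add0n !exprSr.
all: by apply/andP; split; apply/eqP; ring.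
Qed.

Lemma exp_psum_iC N t :
  exp_psum N (iC R * rC t) = Complex (series (cos_coeff t) N) (series (sin_coeff t) N).
Proof.
apply/eqP; rewrite eq_complex /exp_psum /series /= !big_mkord !raddf_sum.
apply/andP; split; apply/eqP; apply: eq_bigr => k _; rewrite expr_iC_rC /=.
  by rewrite /cos_coeff /= -exprnP; ring.
by rewrite /sin_coeff /=; ring.
Qed.

Definition ccvg (u : nat -> C) (l : C) : Prop :=
  (fun N => complex.Re (u N)) @ \oo --> complex.Re l /\
  (fun N => complex.Im (u N)) @ \oo --> complex.Im l.

Lemma ccvg_cis t : ccvg (fun N => exp_psum N (iC R * rC t)) (cis t).
Proof.
split; under eq_fun do rewrite exp_psum_iC /=; rewrite /= unlock.
  exact: is_cvg_series_cos_coeff.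
exact: is_cvg_series_sin_coeff.
Qed.

Lemma ccvgMr u l c : ccvg u l -> ccvg (fun N => u N * c) (l * c).
Proof.
case: c l => x y [a b] [cvg_re cvg_im]; split => /=.
  have -> : (fun N => complex.Re (u N * (x +i* y)%C)) =
            (fun N => complex.Re (u N) * x - complex.Im (u N) * y).
    by apply/funext => N; case: (u N).
  by apply: cvgB; apply: cvgMr_tmp.
have -> : (fun N => complex.Im (u N * (x +i* y)%C)) =
          (fun N => complex.Re (u N) * y + complex.Im (u N) * x).
  by apply/funext => N; case: (u N).
by apply: cvgD; apply: cvgMr_tmp.
Qed.

Lemma ccvg_sum I (r : seq I) (u : I -> nat -> C) (l : I -> C) :
  (forall i, ccvg (u i) (l i)) -> ccvg (fun N => \sum_(i <- r) u i N) (\sum_(i <- r) l i).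
Proof.
move=> cvg_u; split; under eq_fun do rewrite raddf_sum; rewrite raddf_sum;
  by apply: cvg_big => //; [exact: add_continuous | move=> i _; case: (cvg_u i)].
Qed.

Lemma ccvg_lim u l : ccvg u l ->
  Complex (limn (fun N => complex.Re (u N))) (limn (fun N => complex.Im (u N))) = l.
Proof. by case: l => a b [/cvg_lim-> // /cvg_lim-> //]. Qed.

Section Spectral.
Variables (m M : nat) (A : 'M[C]_m) (Q : 'I_M -> 'M[C]_m) (t : 'I_M -> R).
Hypothesis eigenQ : forall s, A *m Q s = (iC R * rC (t s)) *: Q s.
Hypothesis sumQ : \sum_s Q s = 1%:M.

Lemma mxpow_eigen k s : mxpow A k *m Q s = (iC R * rC (t s)) ^+ k *: Q s.
Proof.
elim: k => [|k IH]; first by rewrite mul1mx expr0 scale1r.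
by rewrite /mxpow iterS -/(mxpow A k) -mulmxA IH -scalemxAr eigenQ scalerA exprSr.
Qed.

Lemma exp_partial_spectral N :
  exp_partial A N = \sum_s exp_psum N (iC R * rC (t s)) *: Q s.
Proof.
have mxpowE k : mxpow A k = \sum_s (iC R * rC (t s)) ^+ k *: Q s.
  by rewrite -[mxpow A k]mulmx1 -sumQ mulmx_sumr; apply: eq_bigr => s _; rewrite mxpow_eigen.
rewrite /exp_partial; under eq_bigr do rewrite mxpowE scaler_sumr.
rewrite exchange_big; apply: eq_bigr => s _.
by rewrite scaler_suml; under eq_bigr do rewrite scalerA.
Qed.

Lemma mexp_spectral : mexp A = \sum_s cis (t s) *: Q s.
Proof.
apply/matrixP => a b; rewrite !mxE summxE; apply: ccvg_lim.
under eq_fun do rewrite exp_partial_spectral summxE.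
by apply: ccvg_sum => s; rewrite mxE; under eq_fun do rewrite mxE; apply/ccvgMr/ccvg_cis.
Qed.

End Spectral.
End Exponential.

Section Hamiltonian.
Variables (R : realType) (n : nat).
Local Notation C := R[i].
Local Notation pe := (@pauli_entry R).
Local Notation tensor := (@tensor R n).

Lemma pstring_tensor (sigma : nat -> pauli) : pstring R n sigma = tensor (fun k => pe (sigma k)).
Proof. by []. Qed.

Definition gproj_mx (s : 'I_(2 ^ n)) : 'M[C]_(2 ^ n) := tensor (fun k => gproj (qbit s k)).

Lemma sum_gproj_mx : \sum_s gproj_mx s = 1%:M.
Proof.
rewrite -(tensor_qid R n) -gproj_sum.
rewrite (tensor_ext (g := fun k a b => 1 * gproj false a b + 1 * gproj true a b)); last first.
  by move=> *; rewrite !mul1r.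
rewrite (tensor_expand n (fun _ _ => 1) (fun _ => gproj)).
by apply: eq_bigr => s _; rewrite big1 ?scale1r.
Qed.

Lemma one_site_tensor p k0 :
  one_site R n p k0.+1 = tensor (fun k => if k == k0 then pe p else pe pI).
Proof.
rewrite /one_site pstring_tensor; apply: tensor_ext => k a b _.
by rewrite eqSS; case: (k == k0).
Qed.

Lemma gsite_gproj_mx k0 s : (k0 < n)%N ->
  (one_site R n pX k0.+1 + one_site R n pY k0.+1 + one_site R n pZ k0.+1) *m gproj_mx s =
  rC (sgn (qbit s k0) * sqrt3) *: gproj_mx s.
Proof.
move=> lt_k0n; rewrite !mulmxDl !one_site_tensor /gproj_mx !mulmx_tensor.
have at_k0 p : tensor (fun k => qmul (if k == k0 then pe p else pe pI) (gproj (qbit s k))) =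
    tensor (fun k => if k == k0 then qmul (pe p) (gproj (qbit s k)) else gproj (qbit s k)).
  by apply: tensor_ext => k a b _; case: (k == k0); rewrite ?qmul_pI.
rewrite !at_k0 !tensorD_at //.
rewrite (tensor_ext (g := fun k a b => (if k == k0 then rC (sgn (qbit s k0) * sqrt3) else 1) *
  gproj (qbit s k) a b)); last first.
  by move=> k a b _; case: eqP => [->|_]; rewrite ?gsum_gproj ?mul1r.
rewrite tensorZ (bigD1 (Ordinal lt_k0n)) //= eqxx big1 ?mulr1 //.
by move=> k /negPf; rewrite -val_eqE /= => ->.
Qed.

(* On qubit j = k + 1 the exponent of U is i (pi / (3 sqrt3)) j (X_j + Y_j + Z_j),
   with eigenvalues +- i j pi / 3. *)
Definition angle (k : nat) : R := k.+1%:R * (pi / 3).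

Definition phase (s : 'I_(2 ^ n)) : R := \sum_(k < n) sgn (qbit s k) * angle k.

Lemma hamH_eigen s :
  ((iC R * rC (pi / (3 * Num.sqrt 3))) *: hamH R n) *m gproj_mx s =
  (iC R * rC (phase s)) *: gproj_mx s.
Proof.
rewrite -scalemxAl mulmx_suml big_add1 /= big_mkord.
under eq_bigr do rewrite -scalemxAl gsite_gproj_mx // scalerA.
rewrite -scaler_suml scalerA -mulrA; congr (_ * _ *: _).
have rCE x : rC x = (x%:C)%C by [].
rewrite !rCE; under eq_bigr do rewrite -(rmorph_nat (real_complex R)) -rmorphM.
rewrite -rmorph_sum -rmorphM; congr (real_complex R _).
rewrite /phase big_distrr; apply: eq_bigr => k _ /=.
have sqrt3_neq0 : (sqrt3 : R) != 0 by rewrite gt_eqF // sqrt3_gt0.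
by rewrite /angle -/(sqrt3); field.
Qed.

Lemma Umat_tensor : Umat R n = tensor (fun k => qrot (angle k)).
Proof.
rewrite /Umat (mexp_spectral hamH_eigen sum_gproj_mx).
have cis_phase s : cis (phase s) = \prod_(k < n) cis (sgn (qbit s k) * angle k).
  exact: (big_morph _ (@cisD R) (@cis0 R)).
under eq_bigr do rewrite cis_phase.
rewrite -(tensor_expand n (fun k b => cis (sgn b * angle k)) (fun _ => gproj)).
by apply: tensor_ext => k a b _; rewrite -qrot_spectral /sgn mulN1r mul1r.
Qed.

End Hamiltonian.

Section PauliConjugation.
Variables (R : realType) (n : nat).
Local Notation C := R[i].
Local Notation U := (Umat R n).

Lemma pstring_herm (sigma : nat -> pauli) : adj (pstring R n sigma) = pstring R n sigma.
Proof.
rewrite pstring_tensor adj_tensor; apply: tensor_ext => k a b _.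
rewrite /qadj; case: (sigma k); case: a; case: b => //=;
  by apply/eqP; rewrite eq_complex /= ?oppr0 ?opprK ?eqxx.
Qed.

Lemma uconj_pstring (sigma : nat -> pauli) :
  uconj U (pstring R n sigma) = pstring R n (fun k => iter k.+1 pauli_cycle (sigma k)).
Proof.
rewrite /uconj Umat_tensor !pstring_tensor adj_tensor !mulmx_tensor.
by apply: tensor_ext => k a b _; rewrite -qconj_qrot.
Qed.

Lemma Umat_unitary : adj U *m U = 1%:M.
Proof.
have id_pI : pstring R n (fun _ => pI) = 1%:M.
  by rewrite pstring_tensor -(tensor_qid R n); apply: tensor_ext => k [] [].
have := uconj_pstring (fun _ => pI).
have -> : (fun k => iter k.+1 pauli_cycle pI) = (fun _ => pI).
  by apply/funext => k; apply: iter_cycle_pI.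
by rewrite id_pI /uconj mulmx1; apply: mulmx1C.
Qed.

Lemma uconj_two_site A B j :
  uconj U (two_site R n A B j) = two_site R n (iter j pauli_cycle A) (iter j.+1 pauli_cycle B) j.
Proof.
rewrite /two_site uconj_pstring; congr (pstring R n _); apply/funext => k.
by case: eqP => [<-|_] //; case: eqP => [<-|_] //; rewrite iter_cycle_pI.
Qed.

Definition a10_gens (P : 'M[C]_(2 ^ n)) : Prop :=
  exists j, (1 <= j <= n - 1)%N /\
    (P = two_site R n pX pY j \/ P = two_site R n pY pZ j \/ P = two_site R n pZ pX j).

Definition a7_gens (P : 'M[C]_(2 ^ n)) : Prop :=
  exists j, (1 <= j <= n - 1)%N /\
    (P = two_site R n pX pX j \/ P = two_site R n pY pY j \/ P = two_site R n pZ pZ j).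

Lemma a10_gensP P : a10_gens P <->
  exists j B, [/\ (1 <= j <= n - 1)%N, B <> pI & P = two_site R n (pauli_cycle B) B j].
Proof.
split; first by move=> [j [lt_j [->|[->|->]]]]; [exists j, pY | exists j, pZ | exists j, pX].
by move=> [j [B [lt_j nB ->]]]; exists j; split => //; case: B nB => // _; auto.
Qed.

Lemma a7_gensP P : a7_gens P <->
  exists j q, [/\ (1 <= j <= n - 1)%N, q <> pI & P = two_site R n q q j].
Proof.
split; first by move=> [j [lt_j [->|[->|->]]]]; [exists j, pX | exists j, pY | exists j, pZ].
by move=> [j [q [lt_j nq ->]]]; exists j; split => //; case: q nq => // _; auto.
Qed.

Lemma a10_gens_herm P : a10_gens P -> adj P = P.
Proof. by move=> /a10_gensP [j [B [_ _ ->]]]; apply: pstring_herm. Qed.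

Lemma a7_gens_herm P : a7_gens P -> adj P = P.
Proof. by move=> /a7_gensP [j [q [_ _ ->]]]; apply: pstring_herm. Qed.

Lemma uconj_a10_gens P : a10_gens P -> a7_gens (uconj U P).
Proof.
move=> /a10_gensP [j [B [lt_j nB ->]]]; apply/a7_gensP.
exists j, (iter j.+1 pauli_cycle B); split => //; last by rewrite uconj_two_site iterSr.
by move/iter_cycle_eq_pI.
Qed.

Lemma uconj_a10_gens_onto P : a7_gens P -> exists2 Q, a10_gens Q & uconj U Q = P.
Proof.
move=> /a7_gensP [j [q [lt_j nq ->]]]; have [B iterB] := iter_cycle_onto j.+1 q.
exists (two_site R n (pauli_cycle B) B j); last by rewrite uconj_two_site -iterSr iterB.
apply/a10_gensP; exists j, B; split => // B_pI.
by apply: nq; rewrite -iterB B_pI iter_cycle_pI.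
Qed.

End PauliConjugation.

Theorem mainTheorem13 (R : realType) (n : nat) : (2 <= n)%N ->
  let U := Umat R n in
  let phi := fun a : 'M[R[i]]_(2 ^ n) => U *m a *m adj U in
  (* phi maps a10(n) into a7(n) ... *)
  (forall a, a10 a -> a7 (phi a)) /\
  (* ... onto a7(n) ... *)
  (forall b, a7 b -> exists a, a10 a /\ phi a = b) /\
  (* ... injectively on a10(n) ... *)
  (forall a b, a10 a -> a10 b -> phi a = phi b -> a = b) /\
  (* ... and as a homomorphism of real Lie algebras *)
  (forall a b, a10 a -> a10 b -> phi (a + b) = phi a + phi b) /\
  (forall (r : R) a, a10 a -> phi (rC r *: a) = rC r *: phi a) /\
  (forall a b, a10 a -> a10 b -> phi (comm a b) = comm (phi a) (phi b)).
Proof.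
move=> _ U phi.
have UU : adj U *m U = 1%:M := Umat_unitary R n.
have adjUU : adj (adj U) *m adj U = 1%:M by rewrite adjK; apply: mulmx1C.
have a7_gens_adj (P : 'M[R[i]]_(2 ^ n)) : a7_gens P -> a10_gens (uconj (adj U) P).
  by case/uconj_a10_gens_onto => Q gQ <-; rewrite uconjK.
split; first by move=> a; apply: lie_gen_conj UU (@a10_gens_herm R n) (@uconj_a10_gens R n).
split.
  move=> b b7; exists (uconj (adj U) b); split.
    exact: lie_gen_conj adjUU (@a7_gens_herm R n) a7_gens_adj b7.
  by have := uconjK adjUU b; rewrite adjK.
split; first by move=> a b _ _; apply: (can_inj (uconjK UU)).
split; first by move=> a b _ _; apply: uconjD.
split; first by move=> r a _; apply: uconjZ.
by move=> a b _ _; apply: uconj_comm.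
Qed.
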